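(* Let $\mu\neq0$ and let $\gamma$ be an arc-length parametrized curve in $\mathbb M^2(\rho)$ whose curvature $\kappa$ is non-constant and satisfies $\frac{d^2}{ds^2}(e^{\mu\kappa})+(\kappa^2-\kappa/\mu+\rho)e^{\mu\kappa}=0$. Then there is a constant $d\in\mathbb R$ such that $$\mu^4\kappa_s^2=d\,e^{-2\mu\kappa}-(\mu\kappa-1)^2-\rho\mu^2 .$$
   Context: $\mathbb M^2(\rho)$ is the simply connected complete surface of constant curvature $\rho$; $\kappa$ is the signed geodesic curvature of $\gamma$ and $\kappa_s$ its derivative with respect to arc-length $s$. *)

From Stdlib Require Import Reals.
From Coquelicot Require Import Coquelicot.
Open Scope R_scope.

Definition is_interval (I : R -> Prop) : Prop :=
  forall x y z : R, I x -> I y -> x <= z <= y -> I z.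

(** Dividing the equation by [exp (mu * kappa)] leaves the second-order equation
    [mu kappa'' + mu^2 kappa'^2 + kappa^2 - kappa/mu + rho = 0]. Multiplied by
    [2 mu^3 kappa' exp (2 mu kappa)] it becomes the derivative of
    [exp (2 mu kappa) (mu^4 kappa'^2 + (mu kappa - 1)^2 + rho mu^2)], which is
    therefore constant on the interval; that constant is [d]. *)

From Stdlib Require Import Reals Lra.
From Coquelicot Require Import Coquelicot.
Open Scope R_scope.

Lemma is_interval_between (I : R -> Prop) (s t x : R) :
  is_interval I -> I s -> I t -> Rmin s t <= x <= Rmax s t -> I x.
Proof.
  intros HI Hs Ht Hx; unfold Rmin, Rmax in Hx.
  destruct (Rle_dec s t).
  - exact (HI s t x Hs Ht Hx).
  - exact (HI t s x Ht Hs Hx).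
Qed.

Lemma is_interval_derive_0_const (I : R -> Prop) (F : R -> R) :
  is_interval I -> (forall s, I s -> is_derive F s 0) ->
  forall s t, I s -> I t -> F t = F s.
Proof.
  intros HI HF s t Hs Ht.
  destruct (MVT_gen F s t (fun _ => 0)) as [c [_ Hc]].
  - intros x Hx; apply HF, (is_interval_between I s t); auto; lra.
  - intros x Hx; apply continuity_pt_filterlim, (ex_derive_continuous F).
    exists 0; apply HF, (is_interval_between I s t); auto.
  - lra.
Qed.

Lemma Derive_2_exp_scal (a : R) (f : R -> R) (s : R) :
  locally s (ex_derive f) -> ex_derive (Derive f) s ->
  Derive_n (fun t => exp (a * f t)) 2 s
  = a * (Derive (Derive f) s + a * Derive f s ^ 2) * exp (a * f s).
Proof.
  intros Hf Hf'; simpl.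
  rewrite (Derive_ext_loc _ (fun t => a * Derive f t * exp (a * f t))).
  - apply is_derive_unique; auto_derive.
    + repeat split; [exact Hf' | exact (locally_singleton _ _ Hf)].
    + change (Derive (fun x => Derive f x)) with (Derive (Derive f)).
      change (Derive (fun x => f x)) with (Derive f); ring.
  - apply filter_imp with (2 := Hf); intros t Ht.
    apply is_derive_unique; auto_derive; [exact Ht |].
    change (Derive (fun x => f x)) with (Derive f); ring.
Qed.

Definition first_integral (rho mu : R) (kappa : R -> R) (t : R) : R :=
  exp (2 * mu * kappa t)
  * (mu ^ 4 * Derive kappa t ^ 2 + (mu * kappa t - 1) ^ 2 + rho * mu ^ 2).

Lemma is_derive_first_integral (rho mu : R) (kappa : R -> R) (s : R) :
  mu <> 0 -> ex_derive kappa s -> ex_derive (Derive kappa) s ->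
  is_derive (first_integral rho mu kappa) s
    (2 * mu ^ 3 * Derive kappa s * exp (2 * mu * kappa s)
     * (mu * Derive (Derive kappa) s + mu ^ 2 * Derive kappa s ^ 2
        + (kappa s ^ 2 - kappa s / mu + rho))).
Proof.
  intros Hmu Hk Hk'; unfold first_integral; auto_derive.
  - repeat split; assumption.
  - change (Derive (fun x => Derive kappa x)) with (Derive (Derive kappa)).
    change (Derive (fun x => kappa x)) with (Derive kappa); field; exact Hmu.
Qed.

Theorem proposition2p5 (rho mu : R) (I : R -> Prop) (kappa : R -> R) :
  mu <> 0 ->
  open I -> is_interval I ->
  (forall s, I s -> ex_derive kappa s /\ ex_derive (Derive kappa) s) ->
  (exists s1 s2, I s1 /\ I s2 /\ kappa s1 <> kappa s2) ->
  (forall s, I s ->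
     Derive_n (fun t => exp (mu * kappa t)) 2 s
     + (kappa s ^ 2 - kappa s / mu + rho) * exp (mu * kappa s) = 0) ->
  exists d : R, forall s, I s ->
    mu ^ 4 * (Derive kappa s) ^ 2
    = d * exp (- (2 * mu * kappa s)) - (mu * kappa s - 1) ^ 2 - rho * mu ^ 2.
Proof.
  intros Hmu Hopen HI Hder [s0 [_ [Hs0 _]]] Hode.
  assert (Hreduced : forall s, I s ->
    mu * Derive (Derive kappa) s + mu ^ 2 * Derive kappa s ^ 2
    + (kappa s ^ 2 - kappa s / mu + rho) = 0).
  { intros s Hs.
    assert (Hloc : locally s (ex_derive kappa)).
    { apply filter_imp with (2 := Hopen s Hs); intros t Ht; apply Hder, Ht. }
    assert (Hexp := exp_pos (mu * kappa s)).
    specialize (Hode s Hs).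
    rewrite (Derive_2_exp_scal mu kappa s Hloc (proj2 (Hder s Hs))) in Hode.
    apply (Rmult_eq_reg_r (exp (mu * kappa s))); lra. }
  assert (Hflat : forall s, I s -> is_derive (first_integral rho mu kappa) s 0).
  { intros s Hs; destruct (Hder s Hs) as [Hk Hk'].
    assert (H0 := is_derive_first_integral rho mu kappa s Hmu Hk Hk').
    rewrite (Hreduced s Hs), Rmult_0_r in H0; exact H0. }
  exists (first_integral rho mu kappa s0); intros s Hs.
  rewrite <- (is_interval_derive_0_const I _ HI Hflat s0 s Hs0 Hs).
  unfold first_integral.
  rewrite exp_Ropp; field; apply Rgt_not_eq, exp_pos.
Qed.
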